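(* Let $\mathcal{I}$ be a $\sigma$-ideal on $\mathbb{R}$ satisfying the standing assumptions, and let $L\subseteq\mathbb{R}$ be an $\mathcal{I}$-Luzin set which is linearly independent over $\mathbb{Q}$. Then there exists a set $X\subseteq\mathbb{R}$ such that the family $\{x+L:x\in X\}$ is a partition of $\mathbb{R}$ (its members are pairwise disjoint and cover $\mathbb{R}$).
   Context: Standing assumptions on $\mathcal{I}$: $\mathcal{I}$ is a $\sigma$-ideal of subsets of $\mathbb{R}$ such that $\mathbb{R}\notin\mathcal{I}$; $x+I\in\mathcal{I}$ and $xI\in\mathcal{I}$ for all $x\in\mathbb{R}$, $I\in\mathcal{I}$; every member of $\mathcal{I}$ is contained in a Borel member of $\mathcal{I}$; and for all Borel $A,B\notin\mathcal{I}$ the set $A-B$ has nonempty interior. A set $L\subseteq\mathbb{R}$ is $\mathcal{I}$-Luzin if $|L|=\mathfrak{c}$ and $L\cap I$ is countable for every $I\in\mathcal{I}$. *)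

From Stdlib Require Import Reals QArith Qreals List.
Open Scope R_scope.

Definition rset := R -> Prop.

Definition translate (x : R) (A : rset) : rset := fun y => exists a, A a /\ y = x + a.
Definition scale (x : R) (A : rset) : rset := fun y => exists a, A a /\ y = x * a.
Definition setdiffs (A B : rset) : rset := fun y => exists a b, A a /\ B b /\ y = a - b.

Definition nonempty_interior (A : rset) : Prop :=
  exists x eps, 0 < eps /\ forall y, Rabs (y - x) < eps -> A y.

Inductive Borel : rset -> Prop :=
  | Borel_interval : forall a b : R, Borel (fun y => a < y < b)
  | Borel_compl : forall A, Borel A -> Borel (fun y => ~ A y)
  | Borel_cunion : forall F : nat -> rset, (forall n, Borel (F n)) ->
                     Borel (fun y => exists n, F n y)
  | Borel_ext : forall A B, Borel A -> (forall y, A y <-> B y) -> Borel B.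

Definition sigma_ideal (I : rset -> Prop) : Prop :=
  I (fun _ => False) /\
  (forall A B : rset, I A -> (forall y, B y -> A y) -> I B) /\
  (forall F : nat -> rset, (forall n, I (F n)) -> I (fun y => exists n, F n y)).

Definition standing_assumptions (I : rset -> Prop) : Prop :=
  sigma_ideal I /\
  ~ I (fun _ => True) /\
  (forall x A, I A -> I (translate x A) /\ I (scale x A)) /\
  (forall A, I A -> exists B, Borel B /\ I B /\ forall y, A y -> B y) /\
  (forall A B, Borel A -> Borel B -> ~ I A -> ~ I B -> nonempty_interior (setdiffs A B)).

Definition countable (A : rset) : Prop :=
  exists f : R -> nat, forall x y, A x -> A y -> f x = f y -> x = y.

Definition has_card_continuum (A : rset) : Prop :=
  exists f : R -> R, (forall x y, f x = f y -> x = y) /\ (forall y, A y <-> exists x, f x = y).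

Definition I_Luzin (I : rset -> Prop) (L : rset) : Prop :=
  has_card_continuum L /\
  forall A, I A -> countable (fun y => L y /\ A y).

Fixpoint qcomb (l : list (Q * R)) : R :=
  match l with
  | nil => 0
  | (q, x) :: l' => Q2R q * x + qcomb l'
  end.

Definition Q_lin_indep (L : rset) : Prop :=
  forall l : list (Q * R),
    NoDup (map snd l) -> Forall (fun p => L (snd p)) l ->
    qcomb l = 0 -> Forall (fun p => Qeq (fst p) 0) l.

From Stdlib Require Import Reals QArith Qreals List.
From Stdlib Require Import Lra ClassicalEpsilon FunctionalExtensionality PropExtensionality.
Open Scope R_scope.

(* Let V be the Q-span of L. Since L is a basis of V, a bijection g : L -> R
   extends to a Q-linear map phi : V -> R. A real x is put into X when
   phi (x - r) = 0, where r is a chosen representative of the coset x + V.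
   Every y = x + b with b in L is reached by taking b the element of L with
   phi b = phi (y - r); and x1 + a1 = x2 + a2 forces phi a1 = phi a2, so
   a1 = a2 because phi is injective on L. *)

Fixpoint qcomb_with (h : R -> R) (l : list (Q * R)) : R :=
  match l with
  | nil => 0
  | (q, x) :: l' => Q2R q * h x + qcomb_with h l'
  end.

Lemma qcomb_with_id l : qcomb_with (fun x => x) l = qcomb l.
Proof. induction l as [|[q x] l IH]; simpl; [reflexivity | now rewrite IH]. Qed.

Lemma qcomb_with_app h l1 l2 : qcomb_with h (l1 ++ l2) = qcomb_with h l1 + qcomb_with h l2.
Proof. induction l1 as [|[q x] l IH]; simpl; [ring | rewrite IH; ring]. Qed.

Definition qopp_list (l : list (Q * R)) := map (fun p => (Qopp (fst p), snd p)) l.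

Lemma qcomb_with_opp h l : qcomb_with h (qopp_list l) = - qcomb_with h l.
Proof. induction l as [|[q x] l IH]; simpl; [ring | rewrite IH, Q2R_opp; ring]. Qed.

Lemma Forall_qopp_list (P : R -> Prop) l :
  Forall (fun p => P (snd p)) l -> Forall (fun p => P (snd p)) (qopp_list l).
Proof. intros H; apply Forall_map; exact H. Qed.

Lemma qcomb_with_sub h l1 l2 :
  qcomb_with h (l1 ++ qopp_list l2) = qcomb_with h l1 - qcomb_with h l2.
Proof. rewrite qcomb_with_app, qcomb_with_opp; ring. Qed.

Lemma qcomb_with_single h x : qcomb_with h ((1%Q, x) :: nil) = h x.
Proof. simpl; rewrite RMicromega.Q2R_1; ring. Qed.

Lemma qcomb_with_zero_coefs h l :
  Forall (fun p => Qeq (fst p) 0) l -> qcomb_with h l = 0.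
Proof.
  induction l as [|[q x] l IH]; simpl; intros H; [reflexivity|].
  inversion H as [|? ? Hq Hl]; subst; simpl in Hq.
  rewrite IH, (Qeq_eqR _ _ Hq) by exact Hl; unfold Q2R; simpl; ring.
Qed.

(* Merging repeated vectors, so that independence (stated for lists without
   repetitions) applies to arbitrary lists. *)
Fixpoint qinsert (q : Q) (x : R) (l : list (Q * R)) : list (Q * R) :=
  match l with
  | nil => (q, x) :: nil
  | (q', x') :: l' => if Req_EM_T x x' then (Qplus q q', x') :: l'
                      else (q', x') :: qinsert q x l'
  end.

Lemma qcomb_with_qinsert h q x l :
  qcomb_with h (qinsert q x l) = Q2R q * h x + qcomb_with h l.
Proof.
  induction l as [|[q' x'] l IH]; simpl; [ring|].
  destruct (Req_EM_T x x'); simpl.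
  - subst; rewrite Q2R_plus; ring.
  - rewrite IH; ring.
Qed.

Lemma in_qinsert q x l z : In z (map snd (qinsert q x l)) -> z = x \/ In z (map snd l).
Proof.
  induction l as [|[q' x'] l IH]; simpl.
  - intros [H|[]]; auto.
  - destruct (Req_EM_T x x'); simpl; intros [H|H]; auto.
    destruct (IH H); auto.
Qed.

Lemma NoDup_qinsert q x l : NoDup (map snd l) -> NoDup (map snd (qinsert q x l)).
Proof.
  induction l as [|[q' x'] l IH]; simpl; intros H.
  - repeat constructor; intros [].
  - destruct (Req_EM_T x x'); simpl; [exact H|].
    inversion H; subst; constructor; auto.
    intros Hin; destruct (in_qinsert _ _ _ _ Hin); auto.
Qed.

Lemma Forall_qinsert (P : R -> Prop) q x l :
  P x -> Forall (fun p => P (snd p)) l -> Forall (fun p => P (snd p)) (qinsert q x l).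
Proof.
  induction l as [|[q' x'] l IH]; simpl; intros Hx H; [constructor; auto|].
  inversion H; subst; destruct (Req_EM_T x x'); constructor; auto.
Qed.

Fixpoint qcollect (l : list (Q * R)) : list (Q * R) :=
  match l with
  | nil => nil
  | (q, x) :: l' => qinsert q x (qcollect l')
  end.

Lemma qcomb_with_qcollect h l : qcomb_with h (qcollect l) = qcomb_with h l.
Proof.
  induction l as [|[q x] l IH]; simpl; [reflexivity | now rewrite qcomb_with_qinsert, IH].
Qed.

Lemma NoDup_qcollect l : NoDup (map snd (qcollect l)).
Proof. induction l as [|[q x] l IH]; simpl; [constructor | now apply NoDup_qinsert]. Qed.

Lemma Forall_qcollect (P : R -> Prop) l :
  Forall (fun p => P (snd p)) l -> Forall (fun p => P (snd p)) (qcollect l).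
Proof.
  induction l as [|[q x] l IH]; simpl; intros H; [constructor|].
  inversion H; subst; apply Forall_qinsert; auto.
Qed.

Section LinearExtension.

Variable L : rset.
Hypothesis L_indep : Q_lin_indep L.

Let on_L (l : list (Q * R)) := Forall (fun p => L (snd p)) l.

Lemma Q_lin_indep_qcomb_with h l1 l2 : on_L l1 -> on_L l2 ->
  qcomb l1 = qcomb l2 -> qcomb_with h l1 = qcomb_with h l2.
Proof.
  intros H1 H2 E.
  set (l := qcollect (l1 ++ qopp_list l2)).
  assert (Hl : on_L l) by (apply Forall_qcollect, Forall_app; split;
                           [exact H1 | now apply Forall_qopp_list]).
  assert (Hz : qcomb l = 0).
  { unfold l; rewrite <- qcomb_with_id, qcomb_with_qcollect, qcomb_with_sub,
      !qcomb_with_id, E; ring. }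
  pose proof (qcomb_with_zero_coefs h _ (L_indep l (NoDup_qcollect _) Hl Hz)) as Hh.
  unfold l in Hh; rewrite qcomb_with_qcollect, qcomb_with_sub in Hh; lra.
Qed.

Definition qspan (v : R) : Prop := exists l, on_L l /\ qcomb l = v.

Lemma qspan0 : qspan 0.
Proof. exists nil; split; [constructor | reflexivity]. Qed.

Lemma qspan_sub a b : qspan a -> qspan b -> qspan (a - b).
Proof.
  intros [la [Ha <-]] [lb [Hb <-]]; exists (la ++ qopp_list lb); split.
  - apply Forall_app; split; [exact Ha | now apply Forall_qopp_list].
  - now rewrite <- !qcomb_with_id, qcomb_with_sub.
Qed.

Lemma qspan_basis a : L a -> qspan a.
Proof.
  intros Ha; exists ((1%Q, a) :: nil); split; [now repeat constructor|].
  now rewrite <- qcomb_with_id, qcomb_with_single.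
Qed.

Definition lin_ext (h : R -> R) (v : R) : R :=
  qcomb_with h (epsilon (inhabits nil) (fun l => on_L l /\ qcomb l = v)).

Lemma lin_ext_qcomb h l : on_L l -> lin_ext h (qcomb l) = qcomb_with h l.
Proof.
  intros Hl; unfold lin_ext.
  destruct (epsilon_spec (inhabits nil) (fun l' => on_L l' /\ qcomb l' = qcomb l)
              (ex_intro _ l (conj Hl eq_refl))) as [Hl' E].
  exact (Q_lin_indep_qcomb_with h _ _ Hl' Hl E).
Qed.

Lemma lin_ext_sub h a b : qspan a -> qspan b -> lin_ext h (a - b) = lin_ext h a - lin_ext h b.
Proof.
  intros [la [Ha <-]] [lb [Hb <-]].
  assert (Hab : on_L (la ++ qopp_list lb))
    by (apply Forall_app; split; [exact Ha | now apply Forall_qopp_list]).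
  rewrite !lin_ext_qcomb by assumption.
  rewrite <- qcomb_with_sub, <- lin_ext_qcomb by exact Hab.
  now rewrite <- !qcomb_with_id, qcomb_with_sub.
Qed.

Lemma lin_ext_basis h a : L a -> lin_ext h a = h a.
Proof.
  intros Ha.
  replace a with (qcomb ((1%Q, a) :: nil)) at 1
    by now rewrite <- qcomb_with_id, qcomb_with_single.
  rewrite lin_ext_qcomb by now repeat constructor.
  apply qcomb_with_single.
Qed.

End LinearExtension.

Section CosetTiling.

Variables (V L : rset) (phi : R -> R).
Hypotheses (V0 : V 0) (V_sub : forall a b, V a -> V b -> V (a - b)).
Hypothesis L_sub_V : forall a, L a -> V a.
Hypothesis phi_sub : forall a b, V a -> V b -> phi (a - b) = phi a - phi b.
Hypothesis phi_inj_L : forall a b, L a -> L b -> phi a = phi b -> a = b.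
Hypothesis phi_onto_L : forall r, exists a, L a /\ phi a = r.

Let rep (y : R) : R := epsilon (inhabits 0) (fun z => V (z - y)).

Lemma rep_spec y : V (rep y - y).
Proof.
  apply (epsilon_spec (inhabits 0) (fun z => V (z - y))).
  exists y; now replace (y - y) with 0 by ring.
Qed.

Lemma sub_rep y : V (y - rep y).
Proof. replace (y - rep y) with (0 - (rep y - y)) by ring; auto using rep_spec. Qed.

Lemma rep_eq y1 y2 : V (y1 - y2) -> rep y1 = rep y2.
Proof.
  intros H; unfold rep; f_equal.
  apply functional_extensionality; intros z; apply propositional_extensionality.
  split; intros Hz.
  - replace (z - y2) with ((z - y1) - (0 - (y1 - y2))) by ring; auto.
  - replace (z - y1) with ((z - y2) - (y1 - y2)) by ring; auto.
Qed.

Lemma coset_tiling : exists X : rset,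
  (forall y : R, exists x, X x /\ translate x L y) /\
  (forall x1 x2 : R, X x1 -> X x2 -> x1 <> x2 ->
     forall y, ~ (translate x1 L y /\ translate x2 L y)).
Proof.
  exists (fun x => phi (x - rep x) = 0); split.
  - intros y.
    destruct (phi_onto_L (phi (y - rep y))) as [b [Hb Eb]].
    exists (y - b); split; [|exists b; split; [exact Hb | ring]].
    rewrite (rep_eq (y - b) y) by (replace (y - b - y) with (0 - b) by ring; auto).
    replace (y - b - rep y) with ((y - rep y) - b) by ring.
    rewrite phi_sub, Eb by auto using sub_rep; ring.
  - intros x1 x2 X1 X2 Hne y [[a1 [Ha1 ->]] [a2 [Ha2 E]]].
    apply Hne.
    assert (Hx : x1 - x2 = a2 - a1) by lra.
    assert (Er : rep x1 = rep x2) by (apply rep_eq; rewrite Hx; auto).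
    assert (Hphi : phi (x1 - x2) = 0).
    { replace (x1 - x2) with ((x1 - rep x1) - (x2 - rep x2)) by (rewrite Er; ring).
      rewrite phi_sub, X1, X2 by apply sub_rep; ring. }
    rewrite Hx, phi_sub in Hphi by auto.
    rewrite (phi_inj_L a1 a2) in Hx by (auto; lra); lra.
Qed.

End CosetTiling.

Theorem mainTheorem14 (I : rset -> Prop) (L : rset) :
  standing_assumptions I ->
  I_Luzin I L ->
  Q_lin_indep L ->
  exists X : rset,
    (forall y : R, exists x, X x /\ translate x L y) /\
    (forall x1 x2 : R, X x1 -> X x2 -> x1 <> x2 ->
       forall y, ~ (translate x1 L y /\ translate x2 L y)).
Proof.
  intros _ [[f [f_inj f_onto]] _] L_indep.
  set (g := fun a => epsilon (inhabits 0) (fun x => f x = a)).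
  assert (fg : forall a, L a -> f (g a) = a)
    by (intros a Ha; apply (epsilon_spec (inhabits 0) (fun x => f x = a)), f_onto, Ha).
  assert (Lf : forall r, L (f r)) by (intros r; apply f_onto; eauto).
  apply (coset_tiling (qspan L) L (lin_ext L g)).
  - apply qspan0.
  - apply qspan_sub.
  - apply qspan_basis.
  - now apply lin_ext_sub.
  - intros a b Ha Hb E; rewrite !lin_ext_basis in E by assumption.
    now rewrite <- (fg a Ha), <- (fg b Hb), E.
  - intros r; exists (f r); split; [apply Lf|].
    rewrite lin_ext_basis by auto; apply f_inj, fg, Lf.
Qed.
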